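(* Let $G$ be a graph and let $\mathcal{C}$ be a packing of $K_4(G)$ (i.e., a collection of pairwise vertex-disjoint vertex sets each inducing a complete graph on $4$ vertices in $G$), and write $V(\mathcal{C})$ for the union of the sets in $\mathcal{C}$. Let $\rho\ge 1$ and let $S$ be a $\rho$-approximation solution for \textsc{Bipartization} on $G-V(\mathcal{C})$, i.e., $S$ is an odd cycle transversal of $G-V(\mathcal{C})$ of size at most $\rho$ times the minimum size of an odd cycle transversal of $G-V(\mathcal{C})$. Then $S\cup V(\mathcal{C})$ is a $\max\{2,\rho\}$-approximation solution for \textsc{Bipartization} on $G$, i.e., it is an odd cycle transversal of $G$ of size at most $\max\{2,\rho\}$ times the minimum size of an odd cycle transversal of $G$.
   Context: An odd cycle transversal of a graph $G$ is a set $S\subseteq V(G)$ such that $G-S$ is bipartite. $K_4(G)$ denotes the family of vertex sets of copies of $K_4$ in $G$; a packing of a family of sets is a subfamily of pairwise disjoint sets. *)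

(* A simple graph G is a finite type T of vertices with an
   adjacency relation e : rel T (symmetric and irreflexive, assumed in the theorem). *)
From mathcomp Require Import all_boot all_order all_algebra.
Set Implicit Arguments. Unset Strict Implicit. Unset Printing Implicit Defensive.
Import Order.TTheory GRing.Theory Num.Theory.

Definition bipartite_on (T : finType) (e : rel T) (U : {set T}) : bool :=
  [exists c : {ffun T -> bool},
     [forall x in U, forall y in U, e x y ==> (c x != c y)]].

Definition oct_in (T : finType) (e : rel T) (U S : {set T}) : bool :=
  (S \subset U) && bipartite_on e (U :\: S).

(* Minimum size of an odd cycle transversal of G[U] (U itself is always one). *)
Definition oct_min (T : finType) (e : rel T) (U : {set T}) : nat :=
  \big[minn/#|T|]_(S : {set T} | oct_in e U S) #|S|.

Definition is_K4 (T : finType) (e : rel T) (A : {set T}) : Prop :=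
  #|A| = 4 /\ (forall x y, x \in A -> y \in A -> x != y -> e x y).

Definition K4_packing (T : finType) (e : rel T) (C : {set {set T}}) : Prop :=
  (forall A, A \in C -> is_K4 e A) /\
  (forall A B, A \in C -> B \in C -> A != B -> [disjoint A & B]).

From mathcomp Require Import all_boot all_order all_algebra.
From mathcomp Require Import zify.
Set Implicit Arguments. Unset Strict Implicit. Unset Printing Implicit Defensive.
Import Order.TTheory GRing.Theory Num.Theory.

(* An odd cycle transversal must contain at least two vertices of every K_4,
   since the remaining ones span a triangle otherwise.  If O is an optimal
   transversal of G, then O \ V(C) is a transversal of G - V(C), so
   |S| <= rho |O \ V(C)|, while |V(C)| = 4|C| <= 2 |O ∩ V(C)|.  Adding up,
   |S ∪ V(C)| <= max(2, rho) |O|. *)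

Section OddCycleTransversals.
Variables (T : finType) (e : rel T).
Implicit Types (U V O S A : {set T}) (C : {set {set T}}).

Lemma bipartite_onS U V : U \subset V -> bipartite_on e V -> bipartite_on e U.
Proof.
move=> /subsetP sUV /existsP[c /forallP col]; apply/existsP; exists c.
apply/forallP=> x; apply/implyP=> xU; apply/forallP=> y; apply/implyP=> yU.
by move/implyP: (col x) => /(_ (sUV x xU)) /forallP /(_ y) /implyP /(_ (sUV y yU)).
Qed.

Lemma bipartite_on_no_triangle U x y z :
  bipartite_on e U -> x \in U -> y \in U -> z \in U ->
  e x y -> e y z -> e z x -> False.
Proof.
move=> /existsP[c /forallP col] xU yU zU.
have colE u v : u \in U -> v \in U -> e u v -> c u != c v.
  by move=> uU vU; move/implyP: (col u) => /(_ uU) /forallP /(_ v) /implyP /(_ vU) /implyP.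
move=> /(colE _ _ xU yU) + /(colE _ _ yU zU) + /(colE _ _ zU xU).
by case: (c x); case: (c y); case: (c z).
Qed.

Lemma oct_in_refl U : oct_in e U U.
Proof.
rewrite /oct_in subxx setDv; apply/existsP; exists [ffun=> true].
by apply/forallP=> x; rewrite inE.
Qed.

Lemma oct_min_leq U S : oct_in e U S -> oct_min e U <= #|S|.
Proof. exact: (bigmin_le_cond #|T| (fun S : {set T} => #|S|)). Qed.

Lemma oct_min_attained U : exists2 O, oct_in e U O & #|O| = oct_min e U.
Proof.
have [O UO minE] := eq_bigmin (x := #|T|) U (oct_in e U) (fun S => #|S|)
  (oct_in_refl U) (fun S _ => max_card (mem S)).
by exists O => //; rewrite minE.
Qed.

Lemma oct_inD U O A : oct_in e U O -> oct_in e (U :\: A) (O :\: A).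
Proof.
case/andP=> sOU bipUO; rewrite /oct_in setSD //=.
apply: bipartite_onS bipUO; apply/subsetP=> x; rewrite !inE.
by case: (x \in A); case: (x \in O).
Qed.

Lemma oct_inU U A S : A \subset U -> oct_in e (U :\: A) S -> oct_in e U (S :|: A).
Proof.
move=> sAU /andP[sSUA bipUAS]; rewrite /oct_in subUset sAU andbT.
rewrite (subset_trans sSUA) ?subsetDl //=.
by rewrite setUC -setDDl.
Qed.

Lemma card_oct_K4_gt1 U O A :
  oct_in e U O -> is_K4 e A -> A \subset U -> 1 < #|O :&: A|.
Proof.
move=> /andP[_ bipUO] [cardA adjA] sAU; rewrite ltnNge; apply/negP=> le1.
have : 2 < #|A :\: O| by move: (cardsID O A); rewrite setIC cardA; lia.
case/card_gt2P=> x [y [z [[xAO yAO zAO] [xy yz zx]]]].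
have inUO v : v \in A :\: O -> v \in U :\: O by apply/subsetP; rewrite setSD.
have inA v : v \in A :\: O -> v \in A by case/setDP.
apply: (bipartite_on_no_triangle bipUO (inUO _ xAO) (inUO _ yAO) (inUO _ zAO)).
- exact: adjA (inA _ xAO) (inA _ yAO) xy.
- exact: adjA (inA _ yAO) (inA _ zAO) yz.
- exact: adjA (inA _ zAO) (inA _ xAO) zx.
Qed.

Lemma card_setI_cover D C : trivIset C -> #|D :&: cover C| = \sum_(A in C) #|D :&: A|.
Proof.
move=> tiC; rewrite -sum1_card.
rewrite (eq_bigl (fun x => (x \in cover C) && (x \in D))) => [|x]; last first.
  by rewrite inE andbC.
rewrite big_trivIset_cond //; apply: eq_bigr => A _.
by rewrite -sum1_card; apply: eq_bigl => x; rewrite inE andbC.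
Qed.

Lemma K4_packing_trivIset C : K4_packing e C -> trivIset C.
Proof. by case=> _ disjC; apply/trivIsetP. Qed.

Lemma card_cover_K4_packing C : K4_packing e C -> #|cover C| = 4 * #|C|.
Proof.
move=> packC; rewrite -(eqP (K4_packing_trivIset packC)) mulnC -sum_nat_const.
by apply: eq_bigr => A AC; case: packC => /(_ A AC)[].
Qed.

Lemma card_oct_cover_K4_packing U O C :
  oct_in e U O -> K4_packing e C -> cover C \subset U ->
  2 * #|C| <= #|O :&: cover C|.
Proof.
move=> UO packC sCU; rewrite card_setI_cover ?(K4_packing_trivIset packC) //.
rewrite mulnC -sum_nat_const; apply: leq_sum => A AC.
apply: card_oct_K4_gt1 UO _ (subset_trans (bigcup_sup _ AC) sCU).
by case: packC => /(_ A AC).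
Qed.

End OddCycleTransversals.

Local Open Scope ring_scope.

Theorem lemma4 (R : realFieldType) (T : finType) (e : rel T)
  (e_sym : symmetric e) (e_irr : irreflexive e)
  (C : {set {set T}}) (hC : K4_packing e C)
  (rho : R) (hrho : 1 <= rho) (S : {set T})
  (hS : oct_in e (~: cover C) S)
  (hSrho : (#|S|%:R : R) <= rho * (oct_min e (~: cover C))%:R) :
  oct_in e [set: T] (S :|: cover C) /\
  (#|S :|: cover C|%:R : R) <= Num.max 2 rho * (oct_min e [set: T])%:R.
Proof.
split; first by apply: oct_inU; rewrite ?subsetT // setTD.
have [O TO <-] := oct_min_attained e [set: T].
have outside : (oct_min e (~: cover C) <= #|O :\: cover C|)%N.
  by apply: oct_min_leq; rewrite -setTD; apply: oct_inD.
have inside := card_oct_cover_K4_packing TO hC (subsetT _).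
have union : (#|S :|: cover C| <= #|S| + 4 * #|C|)%N.
  by rewrite -(card_cover_K4_packing hC) cardsU leq_subr.
rewrite -(cardsID (cover C) O) natrD mulrDr.
set a := #|O :\: cover C| in outside *; set b := #|O :&: cover C| in inside *.
have le_rho_max : rho <= Num.max 2 rho by rewrite le_max lexx orbT.
have le_2_max : 2 <= Num.max 2 rho by rewrite le_max lexx.
have S_le : (#|S|%:R : R) <= Num.max 2 rho * a%:R.
  apply: (le_trans hSrho); apply: ler_pM => //; first exact: le_trans hrho.
  by rewrite ler_nat.
have cover_le : (4 * #|C|)%:R <= Num.max 2 rho * b%:R :> R.
  apply: le_trans (ler_wpM2r _ le_2_max) => //; rewrite -natrM ler_nat; lia.
by rewrite addrC; apply: le_trans (lerD S_le cover_le); rewrite -natrD ler_nat.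
Qed.
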